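(* Let $X$ have the Cauchy distribution with location $\mu\in\mathbb{R}$ and scale $\sigma>0$, i.e. density $\frac1\sigma f_0\big(\frac{x-\mu}{\sigma}\big)$ with $f_0(z)=\frac{1}{\pi(1+z^2)}$, and let $F_0$ be the CDF of $f_0$. For $c>1$, the unique positive root of $\frac{f_0(\frac{c}{c+1}\theta)}{f_0(\frac{c}{c-1}\theta)}=\frac{c+1}{c-1}$ is $\theta(c)=\frac{\sqrt{c^2-1}}{c}$, and the infimum coverage $$\psi(c)=\inf_{\mu,\sigma}P_{\mu,\sigma}\big(X-c|X|\le\mu\le X+c|X|\big)= F_0\Big(\frac{c}{c+1}\theta(c)\Big)+1-F_0\Big(\frac{c}{c-1}\theta(c)\Big)$$ is continuous in $c$ and satisfies $\psi(c)\to 1/2$ as $c\downarrow 1$ and $\psi(c)\to1$ as $c\to\infty$. Consequently, for every $\alpha$ with $0<\alpha<1/2$ there exists $c=c(\alpha)>1$ such that $\inf_{\mu\in\mathbb{R},\sigma>0}P_{\mu,\sigma}\big(X-c|X|\le\mu\le X+c|X|\big)=1-\alpha$. *)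

From HB Require Import structures.
From mathcomp Require Import all_boot all_order all_algebra.
From mathcomp Require Import all_classical all_reals all_analysis.
Set Implicit Arguments. Unset Strict Implicit. Unset Printing Implicit Defensive.
Import Order.TTheory GRing.Theory Num.Theory.
Import numFieldNormedType.Exports.
Local Open Scope classical_set_scope.
Local Open Scope ring_scope.

Section Cauchy.
Variable R : realType.

Definition f0 (z : R) : R := (pi * (1 + z ^+ 2))^-1.

Definition F0 (z : R) : R :=
  fine (\int[@lebesgue_measure R]_(x in [set x : R | (x <= z)%R]) (f0 x)%:E)%E.

Definition cauchy_pdf (mu sigma : R) (x : R) : R := sigma^-1 * f0 ((x - mu) / sigma).

Definition coverage (mu sigma c : R) : \bar R :=
  (\int[@lebesgue_measure R]_(x in [set x : R | (x - c * `|x| <= mu <= x + c * `|x|)%R])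
      (cauchy_pdf mu sigma x)%:E)%E.

Definition inf_coverage (c : R) : \bar R :=
  ereal_inf [set y | exists mu sigma : R, 0 < sigma /\ y = coverage mu sigma c].

Definition theta (c : R) : R := Num.sqrt (c ^+ 2 - 1) / c.

Definition psi (c : R) : R :=
  F0 (c / (c + 1) * theta c) + 1 - F0 (c / (c - 1) * theta c).

End Cauchy.

From mathcomp Require Import all_boot all_order all_algebra.
From mathcomp Require Import all_classical all_reals all_analysis.
From mathcomp Require Import ring lra measurable_realfun.
Set Implicit Arguments. Unset Strict Implicit. Unset Printing Implicit Defensive.
Import Order.TTheory GRing.Theory Num.Theory.
Import numFieldNormedType.Exports.
Local Open Scope classical_set_scope.
Local Open Scope ring_scope.

(* Put t = |mu| / sigma, a = c / (c + 1) and b = c / (c - 1).  The event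
   X - c|X| <= mu <= X + c|X| is the complement of an interval between two
   multiples of mu, so integrating the density against its arctangent primitive
   gives coverage 1 - (atan (b t) - atan (a t)) / pi.  By the subtraction formula
   the gap is atan ((b - a) t / (1 + a b t^2)), which by AM-GM is maximal at
   t = 1 / sqrt (a b) = theta c, with value atan (1 / sqrt (c^2 - 1)).  Hence
   psi c = 1/2 + atan (sqrt (c^2 - 1)) / pi, which is continuous with limits 1/2
   and 1, and equals 1 - alpha at c = sqrt (1 + tan^2 (pi (1/2 - alpha))). *)

Section arctangent.
Variable R : realType.
Implicit Types u v : R.

Lemma atan_ge0 u : 0 <= u -> 0 <= atan u.
Proof. by move=> u0; rewrite -(@atan0 R) le_atan. Qed.

Lemma atan_gt0 u : 0 < u -> 0 < atan u.
Proof. by move=> u0; rewrite -(@atan0 R) lt_atan. Qed.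

Lemma cos_atan_neq0 u : cos (atan u) != 0.
Proof. by rewrite cos_atan invr_eq0 gt_eqF// sqrtr_gt0 ltr_pwDl ?sqr_ge0. Qed.

Lemma atanB u v : 0 <= u -> 0 <= v ->
  atan u - atan v = atan ((u - v) / (1 + u * v)).
Proof.
move=> u0 v0; have pi0 : 0 < pi / 2 :> R by rewrite divr_gt0 ?pi_gt0.
have [Au Av] := (atan_ge0 u0, atan_ge0 v0).
have [Bu Bv] := (@atan_ltpi2 R u, @atan_ltpi2 R v).
rewrite -[LHS]tanK; last by rewrite in_itv/=; apply/andP; split; lra.
by congr atan; rewrite -atanN tanD ?cos_atan_neq0// !atanK mulrN opprK.
Qed.

Lemma atanV v : 0 < v -> atan v^-1 = pi / 2 - atan v.
Proof.
move=> v0; have pi0 : 0 < pi / 2 :> R by rewrite divr_gt0 ?pi_gt0.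
have Av := atan_gt0 v0; have Bv := @atan_ltpi2 R v.
rewrite -[RHS]tanK; last by rewrite in_itv/=; apply/andP; split; lra.
have sin_neq0 : sin (atan v) != 0 by rewrite gt_eqF// sin_gt0_pihalf// Av Bv.
congr atan; rewrite -[in LHS](atanK v) /tan.
have -> : pi / 2 - atan v = - (atan v - pi / 2) by ring.
by rewrite sinN cosN sinBpihalf cosBpihalf opprK invf_div.
Qed.

End arctangent.

Section cauchy_density.
Variable R : realType.
Implicit Types x y z : R.

Lemma f0_gt0 z : 0 < f0 z.
Proof. by rewrite /f0 invr_gt0 mulr_gt0 ?pi_gt0 ?ltr_pwDl ?sqr_ge0. Qed.

Lemma f0_div x y : f0 x / f0 y = (1 + y ^+ 2) / (1 + x ^+ 2).
Proof.
have p0 : (pi : R) != 0 by rewrite gt_eqF ?pi_gt0.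
have hx : 1 + x ^+ 2 != 0 by rewrite gt_eqF ?ltr_pwDl ?sqr_ge0.
have hy : 1 + y ^+ 2 != 0 by rewrite gt_eqF ?ltr_pwDl ?sqr_ge0.
by rewrite /f0; move: (pi : R) p0 => p p0; field; rewrite p0 hx hy.
Qed.

Lemma continuous_f0 : continuous (@f0 R).
Proof.
move=> z; apply: cvgV; first by rewrite gt_eqF// mulr_gt0 ?pi_gt0 ?ltr_pwDl ?sqr_ge0.
apply: cvgM; first exact: cvg_cst.
by apply: cvgD; [exact: cvg_cst | exact: exprn_continuous].
Qed.

Lemma cauchy_pdf_ge0 (mu sigma x : R) : 0 < sigma -> 0 <= cauchy_pdf mu sigma x.
Proof. by move=> s0; apply: mulr_ge0; [rewrite invr_ge0 ltW | exact: ltW (f0_gt0 _)]. Qed.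

Lemma cauchy_pdfN (mu sigma x : R) : cauchy_pdf mu sigma (- x) = cauchy_pdf (- mu) sigma x.
Proof.
by rewrite /cauchy_pdf /f0; have -> : ((- x - mu) / sigma) ^+ 2 = ((x - - mu) / sigma) ^+ 2 by ring.
Qed.

Lemma continuous_cauchy_pdf (mu sigma : R) : continuous (cauchy_pdf mu sigma).
Proof.
move=> x; apply: cvgM; first exact: cvg_cst.
apply: (continuous_comp (f := fun x => (x - mu) / sigma)); last exact: continuous_f0.
by apply: cvgM; [apply: cvgB; [exact: cvg_id | exact: cvg_cst] | exact: cvg_cst].
Qed.

Lemma measurable_cauchy_pdf (mu sigma : R) (A : set R) :
  measurable_fun A (fun x => (cauchy_pdf mu sigma x)%:E).
Proof.
apply/measurable_EFinP; apply: measurable_funTS.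
exact: continuous_measurable_fun (@continuous_cauchy_pdf mu sigma).
Qed.

End cauchy_density.

Section cauchy_cdf.
Variable R : realType.
Variables (mu sigma : R).
Hypothesis sigma_gt0 : 0 < sigma.
Local Notation leb := (@lebesgue_measure R).

Definition cauchy_cdf (x : R) : R := 2^-1 + atan ((x - mu) / sigma) / pi.

Lemma is_derive_cauchy_cdf (x : R) : is_derive x 1 cauchy_cdf (cauchy_pdf mu sigma x).
Proof.
have dz : is_derive x 1 (fun x => (x - mu) / sigma) sigma^-1.
  have -> : (fun x => (x - mu) / sigma) = sigma^-1 \*: (id - cst mu).
    by apply/funext => y /=; rewrite mulrC.
  by apply: is_derive_eq; rewrite subr0 /GRing.scale/= mulr1.
have datan := is_derive1_comp (f := atan) (is_derive1_atan _) dz.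
have -> : cauchy_cdf = cst 2^-1 + pi^-1 \*: (atan \o (fun x => (x - mu) / sigma)).
  by apply/funext => y; rewrite /cauchy_cdf !fctE mulrC.
apply: is_derive_eq (is_deriveD (is_derive_cst (2^-1 : R) x 1) (is_deriveZ pi^-1 datan)) _.
rewrite /cauchy_pdf /f0 add0r /GRing.scale /= invrM ?unitfE ?gt_eqF ?pi_gt0 ?ltr_pwDl ?sqr_ge0//.
by ring.
Qed.

Lemma continuous_cauchy_cdf : continuous cauchy_cdf.
Proof.
move=> x; apply: differentiable_continuous; apply/derivable1_diffP.
by have [] := is_derive_cauchy_cdf x.
Qed.

Lemma cauchy_cdf_cvgy : cauchy_cdf x @[x --> +oo] --> (1 : R).
Proof.
have zy : (fun x => (x - mu) / sigma) x @[x --> +oo] --> +oo.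
  apply/cvgryPge => A; near=> x.
  rewrite ler_pdivlMr// lerBrDr; near: x; apply: nbhs_pinfty_ge; exact: num_real.
have -> : 1 = 2^-1 + pi / 2 * pi^-1 :> R.
  by rewrite mulrAC divff ?gt_eqF ?pi_gt0// mul1r; lra.
apply: cvgD; first exact: cvg_cst.
exact: cvgMr_tmp (cvg_comp _ _ zy (@cvgy_atan R)).
Unshelve. all: by end_near. Qed.

Lemma integral_cauchy_pdf_itvy r :
  (\int[leb]_(x in `[r, +oo[) (cauchy_pdf mu sigma x)%:E = (1 - cauchy_cdf r)%:E)%E.
Proof.
rewrite EFinB; apply: ge0_continuous_FTC2y.
- by move=> x _; exact: cauchy_pdf_ge0.
- by apply: continuous_subspaceT; exact: continuous_cauchy_pdf.
- exact: cauchy_cdf_cvgy.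
- by move=> x _; have [] := is_derive_cauchy_cdf x.
- by apply: cvg_at_right_filter; exact: continuous_cauchy_cdf.
- by move=> x _; rewrite derive1E; have [] := is_derive_cauchy_cdf x.
Qed.

End cauchy_cdf.

Section cauchy_tails.
Variable R : realType.
Local Notation leb := (@lebesgue_measure R).

Lemma integral_cauchy_pdf_itvNy (mu sigma l : R) : 0 < sigma ->
  (\int[leb]_(x in `]-oo, l]) (cauchy_pdf mu sigma x)%:E = (cauchy_cdf mu sigma l)%:E)%E.
Proof.
move=> s0; rewrite -[l]opprK ge0_integration_by_substitutionNy; first last.
- by move=> x _; exact: cauchy_pdf_ge0.
- by apply: continuous_subspaceT; exact: continuous_cauchy_pdf.
under eq_integral do rewrite /= cauchy_pdfN.
rewrite integral_cauchy_pdf_itvy // /cauchy_cdf; congr EFin.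
have -> : (- l - - mu) / sigma = - ((- - l - mu) / sigma) by field; rewrite gt_eqF.
rewrite atanN mulNr; lra.
Qed.

Lemma F0E (z : R) : F0 z = 2^-1 + atan z / pi.
Proof.
rewrite /F0 -set_itvNyc.
have f0E x : f0 x = cauchy_pdf 0 1 x by rewrite /cauchy_pdf invr1 mul1r subr0 mulr1.
under eq_integral do rewrite f0E.
by rewrite integral_cauchy_pdf_itvNy // /cauchy_cdf subr0 divr1.
Qed.

End cauchy_tails.

Section theta.
Variable R : realType.
Implicit Types c t : R.

Lemma f0_ratio_eqE c t : 1 < c ->
  f0 (c / (c + 1) * t) / f0 (c / (c - 1) * t) = (c + 1) / (c - 1) <->
  c ^+ 2 * t ^+ 2 = c ^+ 2 - 1.
Proof.
move=> c_gt1; rewrite f0_div.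
have cB1 : c - 1 != 0 by rewrite subr_eq0 gt_eqF.
have cD1 : c + 1 != 0 by rewrite gt_eqF//; lra.
have c2B1 : c ^+ 2 - 1 != 0 by rewrite subr_eq0 gt_eqF ?exprn_egt1.
have den_neq0 : 1 + (c / (c + 1) * t) ^+ 2 != 0 by rewrite gt_eqF ?ltr_pwDl ?sqr_ge0.
have E : (1 + (c / (c - 1) * t) ^+ 2) * (c - 1) - (c + 1) * (1 + (c / (c + 1) * t) ^+ 2)
    = 2 / (c ^+ 2 - 1) * (c ^+ 2 * t ^+ 2 - (c ^+ 2 - 1)).
  by field; rewrite cB1 cD1 c2B1.
have k_neq0 : 2 / (c ^+ 2 - 1) != 0 by rewrite mulf_neq0 ?invr_eq0 ?pnatr_eq0.
split; first by move/eqP; rewrite eqr_div// -subr_eq0 E mulf_eq0 (negbTE k_neq0) subr_eq0 => /eqP.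
by move=> e; apply/eqP; rewrite eqr_div// -subr_eq0 E e subrr mulr0.
Qed.

Lemma theta_gt0 c : 1 < c -> 0 < theta c.
Proof. by move=> c_gt1; rewrite divr_gt0 ?sqrtr_gt0 ?subr_gt0 ?exprn_egt1//; lra. Qed.

Lemma theta_sqr c : 1 < c -> c ^+ 2 * theta c ^+ 2 = c ^+ 2 - 1.
Proof.
move=> c_gt1; rewrite /theta expr_div_n sqr_sqrtr; last by rewrite subr_ge0 ltW ?exprn_egt1.
by field; rewrite gt_eqF//; lra.
Qed.

Lemma theta_unique_root c : 1 < c ->
  0 < theta c /\
  f0 (c / (c + 1) * theta c) / f0 (c / (c - 1) * theta c) = (c + 1) / (c - 1) /\
  (forall t : R, 0 < t ->
     f0 (c / (c + 1) * t) / f0 (c / (c - 1) * t) = (c + 1) / (c - 1) -> t = theta c).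
Proof.
move=> c_gt1; split; first exact: theta_gt0.
split; first exact/f0_ratio_eqE/theta_sqr.
move=> t t_gt0 /(f0_ratio_eqE _ c_gt1); rewrite -theta_sqr// => /mulfI e.
have /e/eqP : c ^+ 2 != 0 by rewrite sqrf_eq0 gt_eqF//; lra.
rewrite eqf_sqr => /orP[/eqP//|/eqP t_eqN].
by have := theta_gt0 c_gt1; lra.
Qed.

End theta.

Section coverage.
Variable R : realType.
Local Notation leb := (@lebesgue_measure R).

Definition coverage_set (m c : R) := [set x : R | x - c * `|x| <= m <= x + c * `|x|].

Lemma coverage_set_gt0 (m c : R) : 0 < m -> 1 < c ->
  coverage_set m c = `]-oo, (- m / (c - 1))] `|` `[(m / (c + 1)), +oo[.
Proof.
move=> m_gt0 c_gt1; have cB1 : 0 < c - 1 by lra.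
have cD1 : 0 < c + 1 by lra.
apply/seteqP; rewrite /coverage_set; split => x /=; rewrite !in_itv /= ?andbT.
- move/andP => [h1 h2]; case: (lerP 0 x) => x0.
    by right; rewrite ler_pdivrMr//; rewrite ger0_norm // in h2; nra.
  by left; rewrite ler_pdivlMr//; rewrite ltr0_norm // in h2; nra.
- case; [rewrite ler_pdivlMr// | rewrite ler_pdivrMr//] => h.
    have x_lt0 : x < 0 by nra.
    by rewrite ltr0_norm//; apply/andP; split; nra.
  have x_gt0 : 0 < x by nra.
  by rewrite gtr0_norm//; apply/andP; split; nra.
Qed.

Lemma coverage_set_lt0 (m c : R) : m < 0 -> 1 < c ->
  coverage_set m c = `]-oo, (m / (c + 1))] `|` `[(- m / (c - 1)), +oo[.
Proof.
move=> m_lt0 c_gt1; have cB1 : 0 < c - 1 by lra.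
have cD1 : 0 < c + 1 by lra.
apply/seteqP; rewrite /coverage_set; split => x /=; rewrite !in_itv /= ?andbT.
- move/andP => [h1 h2]; case: (lerP 0 x) => x0.
    by right; rewrite ler_pdivrMr//; rewrite ger0_norm // in h1; nra.
  by left; rewrite ler_pdivlMr//; rewrite ltr0_norm // in h1; nra.
- case; [rewrite ler_pdivlMr// | rewrite ler_pdivrMr//] => h.
    have x_lt0 : x < 0 by nra.
    by rewrite ltr0_norm//; apply/andP; split; nra.
  have x_gt0 : 0 < x by nra.
  by rewrite gtr0_norm//; apply/andP; split; nra.
Qed.

Lemma coverage_set0 (c : R) : 1 < c -> coverage_set 0 c = `]-oo, 0] `|` `]0, +oo[.
Proof.
move=> c_gt1; apply/seteqP; rewrite /coverage_set; split => x /=; rewrite !in_itv /= ?andbT.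
- by move=> _; case: (lerP x 0) => h; [left | right].
- move=> _; case: (lerP 0 x) => x0.
    by rewrite ger0_norm//; apply/andP; split; nra.
  by rewrite ltr0_norm//; apply/andP; split; nra.
Qed.

Lemma disjoint_itvNy (l : R) (B : set R) : (forall x, B x -> l < x) ->
  [disjoint `]-oo, l] & B].
Proof.
move=> Bl; apply/disj_setPS => x [/=]; rewrite in_itv/= => xl /Bl lx.
by move: (lt_le_trans lx xl); rewrite ltxx.
Qed.

Lemma integral_cauchy_pdf_itvNy_setU (mu sigma l r : R) (B : set R) :
  0 < sigma -> measurable B -> [disjoint `]-oo, l] & B] ->
  (\int[leb]_(x in B) (cauchy_pdf mu sigma x)%:E = (1 - cauchy_cdf mu sigma r)%:E)%E ->
  (\int[leb]_(x in `]-oo, l] `|` B) (cauchy_pdf mu sigma x)%:E =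
    (1 - (cauchy_cdf mu sigma r - cauchy_cdf mu sigma l))%:E)%E.
Proof.
move=> s0 mB lB intB; rewrite ge0_integral_setU//.
- by rewrite integral_cauchy_pdf_itvNy// intB -EFinD; congr EFin; ring.
- exact: measurable_cauchy_pdf.
- by move=> x _; rewrite lee_fin cauchy_pdf_ge0.
Qed.

Definition atan_gap (c t : R) := atan (c / (c - 1) * t) - atan (c / (c + 1) * t).

Lemma coverageE (m s c : R) : 0 < s -> 1 < c ->
  coverage m s c = (1 - atan_gap c (`|m| / s) / pi)%:E.
Proof.
move=> s0 c_gt1; have cB1 : 0 < c - 1 by lra.
have cD1 : 0 < c + 1 by lra.
have Ea : (m / (c + 1) - m) / s = - (c / (c + 1) * (m / s)).
  by field; rewrite !gt_eqF.
have Eb : (- m / (c - 1) - m) / s = - (c / (c - 1) * (m / s)).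
  by field; rewrite !gt_eqF.
rewrite /coverage -/(coverage_set m c) /atan_gap.
case: (ltgtP m 0) => m0.
- rewrite coverage_set_lt0// (integral_cauchy_pdf_itvNy_setU (r := - m / (c - 1))) //.
  + rewrite /cauchy_cdf ltr0_norm// Ea Eb mulNr !mulrN; congr EFin; lra.
  + apply: disjoint_itvNy => x /=; rewrite in_itv/= andbT; apply: lt_le_trans.
    by rewrite (lt_trans (y := 0)) ?pmulr_llt0 ?invr_gt0 ?divr_gt0 ?oppr_gt0.
  + exact: integral_cauchy_pdf_itvy.
- rewrite coverage_set_gt0// (integral_cauchy_pdf_itvNy_setU (r := m / (c + 1))) //.
  + rewrite /cauchy_cdf gtr0_norm// Ea Eb !atanN; congr EFin; lra.
  + apply: disjoint_itvNy => x /=; rewrite in_itv/= andbT; apply: lt_le_trans.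
    by rewrite (lt_trans (y := 0)) ?pmulr_llt0 ?invr_gt0 ?divr_gt0 ?oppr_lt0.
  + exact: integral_cauchy_pdf_itvy.
- rewrite m0 coverage_set0// (integral_cauchy_pdf_itvNy_setU (r := 0)) //.
  + by rewrite normr0 mul0r !mulr0 atan0 !subrr mul0r subr0.
  + by apply: disjoint_itvNy => x /=; rewrite in_itv/= andbT.
  + rewrite integral_itv_obnd_cbnd; first exact: integral_cauchy_pdf_itvy.
    exact: measurable_cauchy_pdf.
Qed.

Lemma atan_gap_le (a b t t0 : R) : 0 < a -> a <= b -> 0 <= t -> 0 < t0 ->
  a * b * t0 ^+ 2 = 1 -> atan (b * t) - atan (a * t) <= atan (b * t0) - atan (a * t0).
Proof.
move=> a0 ab t_ge0 t0_gt0 abt0.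
have b0 : 0 < b := lt_le_trans a0 ab.
rewrite !atanB ?mulr_ge0 ?(ltW a0) ?(ltW b0) ?(ltW t0_gt0)//; apply: le_atan.
have -> : 1 + b * t0 * (a * t0) = 2 by rewrite mulrACA [b * a]mulrC -expr2 abt0.
rewrite ler_pdivrMr ?ltr_pwDl ?mulr_ge0 ?(ltW a0) ?(ltW b0)//.
rewrite -subr_ge0 -(pmulr_rge0 _ t0_gt0).
(* AM-GM, using a b t0^2 = 1 *)
have -> : t0 * ((b * t0 - a * t0) / 2 * (1 + b * t * (a * t)) - (b * t - a * t))
    = (b - a) / 2 * (t - t0) ^+ 2 + (b - a) / 2 * t ^+ 2 * (a * b * t0 ^+ 2 - 1).
  by field.
by rewrite abt0 subrr mulr0 addr0 mulr_ge0 ?sqr_ge0 ?divr_ge0 ?subr_ge0.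
Qed.

Lemma atan_gap_le_theta (c t : R) : 1 < c -> 0 <= t -> atan_gap c t <= atan_gap c (theta c).
Proof.
move=> c_gt1 t_ge0; apply: atan_gap_le => //; last 2 first.
- exact: theta_gt0.
- have c2B1 : c ^+ 2 - 1 != 0 by rewrite subr_eq0 gt_eqF ?exprn_egt1.
  rewrite -[RHS](divff c2B1) -{1}(theta_sqr c_gt1).
  by field; rewrite c2B1 !gt_eqF//; lra.
- by rewrite divr_gt0//; lra.
- by rewrite ler_pM2l ?lef_pV2 ?posrE; lra.
Qed.

Lemma inf_coverageE (c : R) : 1 < c ->
  inf_coverage c = (1 - atan_gap c (theta c) / pi)%:E.
Proof.
move=> c_gt1; apply/eqP; rewrite eq_le; apply/andP; split.
- apply: ereal_inf_lbound; exists (theta c), 1; split => //.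
  by rewrite coverageE// divr1 gtr0_norm// theta_gt0.
- apply: le_ereal_inf_tmp => y [m [s [s0 ->]]].
  rewrite coverageE// lee_fin lerB// ler_pM2r ?invr_gt0 ?pi_gt0//.
  exact: atan_gap_le_theta (divr_ge0 (normr_ge0 m) (ltW s0)).
Qed.

End coverage.

Section psi.
Variable R : realType.
Implicit Types c : R.

Lemma atan_gap_theta c : 1 < c ->
  atan_gap c (theta c) = pi / 2 - atan (Num.sqrt (c ^+ 2 - 1)).
Proof.
move=> c_gt1; have cB1 : 0 < c - 1 by lra.
have cD1 : 0 < c + 1 by lra.
have c2B1 : 0 < c ^+ 2 - 1 by rewrite subr_gt0 exprn_egt1.
set r := Num.sqrt (c ^+ 2 - 1).
have r_gt0 : 0 < r by rewrite sqrtr_gt0.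
have r2 : r ^+ 2 = c ^+ 2 - 1 by rewrite sqr_sqrtr// ltW.
rewrite /atan_gap atanB ?mulr_ge0 ?divr_ge0 ?invr_ge0 ?(ltW (theta_gt0 c_gt1))//; try lra.
rewrite -atanV//; congr atan; rewrite /theta -/r.
have -> : c / (c - 1) * (r / c) - c / (c + 1) * (r / c) = 2 * r / r ^+ 2.
  by rewrite r2; field; rewrite !gt_eqF//; lra.
have -> : c / (c - 1) * (r / c) * (c / (c + 1) * (r / c)) = 1.
  by rewrite -[RHS](divff (lt0r_neq0 c2B1)) -{1}r2; field; rewrite !gt_eqF//; lra.
by field; rewrite gt_eqF.
Qed.

Definition psi_atan c : R := 2^-1 + atan (Num.sqrt (c ^+ 2 - 1)) / pi.

Lemma psi_atanE c : 1 < c -> psi c = psi_atan c.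
Proof.
move=> c_gt1; have := atan_gap_theta c_gt1.
rewrite /psi /psi_atan /atan_gap !F0E => gapE.
set a := atan (c / (c + 1) * theta c) in gapE *.
have -> : atan (c / (c - 1) * theta c) = a + (pi / 2 - atan (Num.sqrt (c ^+ 2 - 1))).
  by rewrite -gapE; ring.
(* [field] would unfold [pi], so abstract it first *)
by have := pi_gt0 R; move: (pi : R) => p p_gt0; field; rewrite gt_eqF.
Qed.

Lemma inf_coverage_psi c : 1 < c -> inf_coverage c = (psi c)%:E.
Proof.
move=> c_gt1; rewrite inf_coverageE// psi_atanE// /psi_atan atan_gap_theta//.
congr EFin; have := pi_gt0 R; move: (pi : R) => p p_gt0.
by field; rewrite gt_eqF.
Qed.

Lemma continuous_psi_atan : continuous psi_atan.
Proof.
move=> x; apply: cvgD; first exact: cvg_cst.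
apply: cvgMr_tmp.
apply: (continuous_comp (f := fun c : R => Num.sqrt (c ^+ 2 - 1))); last exact: continuous_atan.
apply: (continuous_comp (f := fun c : R => c ^+ 2 - 1)); last exact: sqrt_continuous.
by apply: cvgB; [exact: exprn_continuous | exact: cvg_cst].
Qed.

Lemma continuous_psi c : 1 < c -> {for c, continuous (@psi R)}.
Proof.
move=> c_gt1; have psiE : {near c, psi_atan =1 @psi R}.
  by near=> x; rewrite psi_atanE//; near: x; exact: lt_nbhsr.
apply: cvg_trans (near_eq_cvg psiE) _.
by rewrite psi_atanE//; exact: continuous_psi_atan.
Unshelve. all: by end_near. Qed.

Lemma psi_cvg1 : psi x @[x --> 1^'+] --> (2^-1 : R).
Proof.
have psiE : {near 1^'+, psi_atan =1 @psi R}.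
  by near=> x; rewrite psi_atanE//; near: x; exact: nbhs_right_gt.
apply: cvg_trans (near_eq_cvg psiE) _.
have -> : 2^-1 = psi_atan 1 by rewrite /psi_atan expr1n subrr sqrtr0 atan0 mul0r addr0.
by apply: cvg_at_right_filter; exact: continuous_psi_atan.
Unshelve. all: by end_near. Qed.

Lemma psi_cvgy : psi x @[x --> +oo] --> (1 : R).
Proof.
have psiE : {near +oo, psi_atan =1 @psi R}.
  by near=> x; rewrite psi_atanE//; near: x; apply: nbhs_pinfty_gt; exact: num_real.
apply: cvg_trans (near_eq_cvg psiE) _.
have sqrt_cvgy : (fun x : R => Num.sqrt (x ^+ 2 - 1)) x @[x --> +oo] --> +oo.
  apply/cvgryPge => A; near=> x.
  have x_ge1 : 1 <= x by near: x; apply: nbhs_pinfty_ge; exact: num_real.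
  have xA : A + 1 <= x by near: x; apply: nbhs_pinfty_ge; exact: num_real.
  have : x - 1 <= Num.sqrt (x ^+ 2 - 1).
    rewrite -[leLHS]ger0_norm ?subr_ge0// -sqrtr_sqr.
    by apply: ler_wsqrtr; rewrite !expr2; nra.
  lra.
have -> : 1 = 2^-1 + pi / 2 * pi^-1 :> R.
  by rewrite mulrAC divff ?gt_eqF ?pi_gt0// mul1r; lra.
apply: cvgD; first exact: cvg_cst.
exact: cvgMr_tmp (cvg_comp _ _ sqrt_cvgy (@cvgy_atan R)).
Unshelve. all: by end_near. Qed.

Lemma inf_coverage_onto (alpha : R) : 0 < alpha < 2^-1 ->
  exists c : R, 1 < c /\ inf_coverage c = (1 - alpha)%:E.
Proof.
move=> /andP[alpha_gt0 alpha_lt2].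
have pi0 : (0 : R) < pi := pi_gt0 R.
set y := pi * (2^-1 - alpha).
have y_gt0 : 0 < y by rewrite mulr_gt0// subr_gt0.
have y_lt : y < pi / 2 by rewrite /y; nra.
have t_gt0 : 0 < tan y.
  by rewrite divr_gt0 ?cos_gt0_pihalf ?sin_gt0_pihalf ?y_gt0//; apply/andP; split; lra.
exists (Num.sqrt (1 + tan y ^+ 2)).
have c_gt1 : 1 < Num.sqrt (1 + tan y ^+ 2).
  by rewrite -[X in X < _]sqrtr1 ltr_sqrt ?ltr_pwDr ?ltr01 ?exprn_gt0.
split => //; rewrite inf_coverage_psi// psi_atanE// /psi_atan.
rewrite sqr_sqrtr ?addr_ge0 ?sqr_ge0// [1 + _]addrC addrK sqrtr_sqr gtr0_norm//.
rewrite tanK; last by rewrite in_itv/=; apply/andP; split; lra.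
by congr EFin; rewrite /y mulrAC divff ?gt_eqF// mul1r; lra.
Qed.

End psi.

Theorem mainTheorem7 (R : realType) :
  (forall c : R, 1 < c ->
     0 < theta c /\
     f0 (c / (c + 1) * theta c) / f0 (c / (c - 1) * theta c) = (c + 1) / (c - 1) /\
     (forall t : R, 0 < t ->
        f0 (c / (c + 1) * t) / f0 (c / (c - 1) * t) = (c + 1) / (c - 1) ->
        t = theta c)) /\
  (forall c : R, 1 < c -> inf_coverage c = (psi c)%:E) /\
  (forall c : R, 1 < c -> {for c, continuous (@psi R)}) /\
  (psi x @[x --> 1^'+] --> (2^-1 : R)) /\
  (psi x @[x --> +oo] --> (1 : R)) /\
  (forall alpha : R, 0 < alpha < 2^-1 ->
     exists c : R, 1 < c /\ inf_coverage c = (1 - alpha)%:E).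
Proof.
split; first exact: theta_unique_root.
split; first exact: inf_coverage_psi.
split; first exact: continuous_psi.
split; first exact: psi_cvg1.
split; first exact: psi_cvgy.
exact: inf_coverage_onto.
Qed.
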